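(* Let $\mathcal E_i\equiv1\to H_i\xrightarrow{\alpha_i}G_i\xrightarrow{\beta_i}K_i\to1$ ($i=1,2$) be central extensions of multiplicative Lie algebras with $\alpha_1(H_1)=\mathcal Z(G_1)$ and $\alpha_2(H_2)=\mathcal Z(G_2)$, and let $(\lambda,\mu,\nu)$ be a morphism from $\mathcal E_1$ to $\mathcal E_2$ such that $\ker\mu\cap{}^M[G_1,G_1]=1$ and $\mu(G_1)\,\alpha_2(H_2)=G_2$. Then $(\lambda,\mu,\nu)$ is an isoclinic morphism.
   Context: A multiplicative Lie algebra is a group $(G,\cdot)$ with a binary operation $\star$ such that for all $x,y,z\in G$: $x\star x=1$; $x\star(yz)=(x\star y)\,{}^y(x\star z)$; $(xy)\star z={}^x(y\star z)(x\star z)$; $((x\star y)\star{}^yz)((y\star z)\star{}^zx)((z\star x)\star{}^xy)=1$; ${}^z(x\star y)={}^zx\star{}^zy$, where ${}^xy=xyx^{-1}$. Homomorphisms preserve both operations. $Z(G)$ is the group center, $LZ(G)=\{x: x\star y=1\ \forall y\}$, $\mathcal Z(G)=LZ(G)\cap Z(G)$; $[x,y]$ is the group commutator; ${}^M[G,G]=(G\star G)[G,G]$ with $G\star G$ the ideal generated by all $a\star b$. A central extension is a short exact sequence $1\to H\xrightarrow{\alpha}G\xrightarrow{\beta}K\to1$ of multiplicative Lie algebras with $\alpha(H)\subseteq\mathcal Z(G)$. A morphism $(\lambda,\mu,\nu)$ from $\mathcal E_1$ to $\mathcal E_2$ consists of homomorphisms $\lambda:H_1\to H_2$, $\mu:G_1\to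 G_2$, $\nu:K_1\to K_2$ with $\mu\alpha_1=\alpha_2\lambda$, $\beta_2\mu=\nu\beta_1$. It is an isoclinic morphism if $\nu$ and $\mu|_{{}^M[G_1,G_1]}:{}^M[G_1,G_1]\to{}^M[G_2,G_2]$ are isomorphisms such that $\mu([g,g'])=[h,h']$ and $\mu(g\star g')=h\star h'$ whenever $g,g'\in G_1$, $h,h'\in G_2$ with $\beta_2(h)=\nu\beta_1(g)$, $\beta_2(h')=\nu\beta_1(g')$. *)

Set Implicit Arguments.

Record MLA := {
  car :> Type;
  mul : car -> car -> car;
  one : car;
  inv : car -> car;
  star : car -> car -> car;
  mulA : forall x y z, mul x (mul y z) = mul (mul x y) z;
  mul1g : forall x, mul one x = x;
  mulg1 : forall x, mul x one = x;
  mulVg : forall x, mul (inv x) x = one;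
  mulgV : forall x, mul x (inv x) = one;
  star_xx : forall x, star x x = one;
  star_mulr : forall x y z,
      star x (mul y z) = mul (star x y) (mul y (mul (star x z) (inv y)));
  star_mull : forall x y z,
      star (mul x y) z = mul (mul x (mul (star y z) (inv x))) (star x z);
  star_jacobi : forall x y z,
      mul (mul (star (star x y) (mul y (mul z (inv y))))
               (star (star y z) (mul z (mul x (inv z)))))
          (star (star z x) (mul x (mul y (inv x)))) = one;
  star_conj : forall x y z,
      mul z (mul (star x y) (inv z)) =
      star (mul z (mul x (inv z))) (mul z (mul y (inv z)))
}.

Arguments mul {m}. Arguments one {m}. Arguments inv {m}. Arguments star {m}.

Definition conj {G : MLA} (x y : G) : G := mul x (mul y (inv x)).
Definition comm {G : MLA} (x y : G) : G := mul x (mul y (mul (inv x) (inv y))).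

Definition is_hom {G1 G2 : MLA} (f : G1 -> G2) : Prop :=
  (forall x y, f (mul x y) = mul (f x) (f y)) /\
  (forall x y, f (star x y) = star (f x) (f y)).

Definition is_subgroup {G : MLA} (S : G -> Prop) : Prop :=
  S one /\ (forall x y, S x -> S y -> S (mul x y)) /\ (forall x, S x -> S (inv x)).

Definition is_ideal {G : MLA} (S : G -> Prop) : Prop :=
  is_subgroup S /\ (forall g x, S x -> S (conj g x)) /\
  (forall g x, S x -> S (star g x)).

Definition starG {G : MLA} (x : G) : Prop :=
  forall I : G -> Prop, is_ideal I -> (forall a b : G, I (star a b)) -> I x.

Definition commG {G : MLA} (x : G) : Prop :=
  forall S : G -> Prop, is_subgroup S -> (forall a b : G, S (comm a b)) -> S x.

Definition McommG {G : MLA} (x : G) : Prop :=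
  exists a b, starG a /\ commG b /\ x = mul a b.

(* centre, Lie centre, and Z(G) = LZ(G) ∩ Z(G) *)
Definition centerG {G : MLA} (x : G) : Prop := forall y : G, mul x y = mul y x.
Definition LcenterG {G : MLA} (x : G) : Prop := forall y : G, star x y = one.
Definition MZ {G : MLA} (x : G) : Prop := LcenterG x /\ centerG x.

Definition central_extension {H G K : MLA} (alpha : H -> G) (beta : G -> K) : Prop :=
  is_hom alpha /\ is_hom beta /\
  (forall h1 h2, alpha h1 = alpha h2 -> h1 = h2) /\
  (forall k, exists g, beta g = k) /\
  (forall g, beta g = one <-> exists h, alpha h = g) /\
  (forall h, MZ (alpha h)).

Definition ext_morphism {H1 G1 K1 H2 G2 K2 : MLA}
  (alpha1 : H1 -> G1) (beta1 : G1 -> K1) (alpha2 : H2 -> G2) (beta2 : G2 -> K2)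
  (lam : H1 -> H2) (mu : G1 -> G2) (nu : K1 -> K2) : Prop :=
  is_hom lam /\ is_hom mu /\ is_hom nu /\
  (forall h, mu (alpha1 h) = alpha2 (lam h)) /\
  (forall g, beta2 (mu g) = nu (beta1 g)).

Definition isoclinic_morphism {H1 G1 K1 H2 G2 K2 : MLA}
  (alpha1 : H1 -> G1) (beta1 : G1 -> K1) (alpha2 : H2 -> G2) (beta2 : G2 -> K2)
  (lam : H1 -> H2) (mu : G1 -> G2) (nu : K1 -> K2) : Prop :=
  ext_morphism alpha1 beta1 alpha2 beta2 lam mu nu /\
  (forall k1 k1', nu k1 = nu k1' -> k1 = k1') /\
  (forall k2, exists k1, nu k1 = k2) /\
  (forall g, McommG g -> McommG (mu g)) /\
  (forall g g', McommG g -> McommG g' -> mu g = mu g' -> g = g') /\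
  (forall x, McommG x -> exists g, McommG g /\ mu g = x) /\
  (forall (g g' : G1) (h h' : G2),
      beta2 h = nu (beta1 g) -> beta2 h' = nu (beta1 g') ->
      mu (comm g g') = comm h h' /\ mu (star g g') = star h h').

(* Commutators and stars in a multiplicative Lie algebra are unchanged when an
   argument is multiplied by an element of the centre Z(G) = LZ(G) ∩ Z(G).
   Since G2 = mu(G1) Z(G2), every commutator or star in G2 is the image under
   mu of one in G1; this gives both the compatibility of mu with [-,-] and *
   on lifts along nu, and the surjectivity of mu onto ^M[G2,G2].  Conversely,
   if mu(x) is central then every [x,y] and x * y lies in ^M[G1,G1] and is
   killed by mu, hence is trivial: x is central, so x ∈ ker beta1.  Applied to
   x = g g'^-1 with nu(beta1 g) = nu(beta1 g'), this makes nu injective. *)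

Set Implicit Arguments.

Arguments mulA {m}. Arguments mul1g {m}. Arguments mulg1 {m}.
Arguments mulVg {m}. Arguments mulgV {m}.
Arguments star_xx {m}. Arguments star_mulr {m}. Arguments star_mull {m}.

Section GroupTheory.
Context {G : MLA}.
Implicit Types x y z c u w : G.

Lemma mulKg x y : mul x (mul (inv x) y) = y.
Proof. rewrite mulA, mulgV, mul1g. reflexivity. Qed.

Lemma mulVKg x y : mul (inv x) (mul x y) = y.
Proof. rewrite mulA, mulVg, mul1g. reflexivity. Qed.

Lemma mulgK x y : mul (mul y x) (inv x) = y.
Proof. rewrite <- mulA, mulgV, mulg1. reflexivity. Qed.

Lemma mulg_cancel_l x y z : mul x y = mul x z -> y = z.
Proof. intro E. rewrite <- (mulVKg x y), <- (mulVKg x z), E. reflexivity. Qed.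

Lemma mulg_cancel_r x y z : mul y x = mul z x -> y = z.
Proof. intro E. rewrite <- (mulgK x y), <- (mulgK x z), E. reflexivity. Qed.

Lemma inv_unique x y : mul x y = one -> y = inv x.
Proof. intro E. apply (mulg_cancel_l x). rewrite E, mulgV. reflexivity. Qed.

Lemma mulgV_eq1 x y : mul x (inv y) = one -> x = y.
Proof. intro E. apply (mulg_cancel_r (inv y)). rewrite E, mulgV. reflexivity. Qed.

Lemma invgK x : inv (inv x) = x.
Proof. symmetry. apply inv_unique, mulVg. Qed.

Lemma invMg x y : inv (mul x y) = mul (inv y) (inv x).
Proof.
  symmetry. apply inv_unique.
  rewrite <- mulA, (mulA y), mulgV, mul1g, mulgV. reflexivity.
Qed.

Lemma invg1 : inv (@one G) = one.
Proof. symmetry. apply inv_unique, mul1g. Qed.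

Lemma comm_eq1_commute x y : comm x y = one -> mul x y = mul y x.
Proof.
  unfold comm. intro E. rewrite !mulA in E.
  apply (mulg_cancel_r (inv x)), (mulg_cancel_r (inv y)).
  rewrite E, mulgK, mulgV. reflexivity.
Qed.

Lemma comm_center_l c y : centerG c -> comm c y = one.
Proof.
  intro Hc. unfold comm. rewrite mulA, Hc, <- mulA, mulKg, mulgV. reflexivity.
Qed.

Lemma comm_mulZl u c w : centerG c -> comm (mul u c) w = comm u w.
Proof.
  intro Hc. unfold comm. rewrite invMg, <- !mulA. f_equal.
  rewrite (mulA c w), Hc, <- mulA. f_equal. apply mulKg.
Qed.

Lemma comm_mulZr u c w : centerG c -> comm w (mul u c) = comm w u.
Proof.
  intro Hc. unfold comm. rewrite invMg, <- !mulA. f_equal. f_equal.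
  rewrite mulA, Hc, <- mulA, mulKg. reflexivity.
Qed.

Lemma conj_mulZl u c w : centerG c -> conj (mul u c) w = conj u w.
Proof.
  intro Hc. unfold conj. rewrite invMg, <- !mulA. f_equal.
  rewrite (mulA c w), Hc, <- mulA, mulKg. reflexivity.
Qed.

(* Expand (xy) * (xy) = 1 with both distributivity axioms. *)
Lemma star_anti x y : mul (star y x) (star x y) = one.
Proof.
  pose proof (star_xx (mul x y)) as E.
  rewrite star_mull, !star_mulr, !star_xx, mul1g, mul1g, mulgV, mulg1 in E.
  rewrite <- !mulA, mulVKg in E.
  apply inv_unique in E.
  apply (mulg_cancel_r (inv x)). rewrite mul1g, <- mulA. exact E.
Qed.

Lemma starC x y : star x y = inv (star y x).
Proof. apply inv_unique, star_anti. Qed.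

Lemma star_LcenterG_r w c : LcenterG c -> star w c = one.
Proof. intro Hc. rewrite starC, Hc, invg1. reflexivity. Qed.

Lemma star_mulZl u c w : MZ c -> star (mul u c) w = star u w.
Proof. intros [Hl _]. rewrite star_mull, Hl, mul1g, mulgV, mul1g. reflexivity. Qed.

Lemma star_mulZr u c w : MZ c -> star w (mul u c) = star w u.
Proof.
  intros [Hl _].
  rewrite star_mulr, (star_LcenterG_r w Hl), mul1g, mulgV, mulg1. reflexivity.
Qed.

Lemma starG_ideal : is_ideal (@starG G).
Proof.
  repeat split.
  - intros I [[I1 _] _] _. exact I1.
  - intros x y Hx Hy I HI Hst.
    apply (proj1 (proj2 (proj1 HI))); [apply Hx | apply Hy]; assumption.
  - intros x Hx I HI Hst. apply (proj2 (proj2 (proj1 HI))), Hx; assumption.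
  - intros g x Hx I HI Hst. apply (proj1 (proj2 HI)), Hx; assumption.
  - intros g x Hx I HI Hst. apply (proj2 (proj2 HI)), Hx; assumption.
Qed.

Lemma starG_star x y : starG (star x y).
Proof. intros I _ H. apply H. Qed.

Lemma commG_subgroup : is_subgroup (@commG G).
Proof.
  repeat split.
  - intros S [S1 _] _. exact S1.
  - intros x y Hx Hy S HS Hc. apply (proj1 (proj2 HS)); [apply Hx | apply Hy]; assumption.
  - intros x Hx S HS Hc. apply (proj2 (proj2 HS)), Hx; assumption.
Qed.

Lemma commG_comm x y : commG (comm x y).
Proof. intros S _ H. apply H. Qed.

Lemma McommG_starG x : starG x -> McommG x.
Proof.
  intro Hx. exists x, one. split; [exact Hx | split].
  - apply commG_subgroup.
  - rewrite mulg1. reflexivity.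
Qed.

Lemma McommG_commG x : commG x -> McommG x.
Proof.
  intro Hx. exists one, x. split; [apply starG_ideal | split; [exact Hx |]].
  rewrite mul1g. reflexivity.
Qed.

(* (a b)(a' b') = (a (b a' b^-1)) (b b'), and G * G is normal. *)
Lemma McommG_mul x y : McommG x -> McommG y -> McommG (mul x y).
Proof.
  intros [a [b [Ha [Hb ->]]]] [a' [b' [Ha' [Hb' ->]]]].
  destruct starG_ideal as [[_ [starG_mul _]] [starG_conj _]].
  exists (mul a (conj b a')), (mul b b'). split; [| split].
  - apply starG_mul; auto.
  - apply commG_subgroup; auto.
  - unfold conj. rewrite <- !mulA, mulVKg. reflexivity.
Qed.

Lemma McommG_inv x : McommG x -> McommG (inv x).
Proof.
  intros [a [b [Ha [Hb ->]]]].
  destruct starG_ideal as [[_ [_ starG_inv]] [starG_conj _]].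
  exists (conj (inv b) (inv a)), (inv b). split; [| split].
  - apply starG_conj, starG_inv, Ha.
  - apply commG_subgroup, Hb.
  - unfold conj. rewrite invMg, invgK, <- !mulA, mulgV, mulg1. reflexivity.
Qed.

End GroupTheory.

Section Homomorphism.
Context {G1 G2 : MLA} {f : G1 -> G2}.
Hypothesis Hf : is_hom f.

Lemma hom_mul x y : f (mul x y) = mul (f x) (f y).
Proof. apply (proj1 Hf). Qed.

Lemma hom_star x y : f (star x y) = star (f x) (f y).
Proof. apply (proj2 Hf). Qed.

Lemma hom_one : f one = one.
Proof. apply (mulg_cancel_l (f one)). rewrite <- hom_mul, !mulg1. reflexivity. Qed.

Lemma hom_inv x : f (inv x) = inv (f x).
Proof. apply inv_unique. rewrite <- hom_mul, mulgV. apply hom_one. Qed.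

Lemma hom_conj x y : f (conj x y) = conj (f x) (f y).
Proof. unfold conj. rewrite !hom_mul, hom_inv. reflexivity. Qed.

Lemma hom_comm x y : f (comm x y) = comm (f x) (f y).
Proof. unfold comm. rewrite !hom_mul, !hom_inv. reflexivity. Qed.

Lemma starG_hom x : starG x -> starG (f x).
Proof.
  intro Hx. apply (Hx (fun y => starG (f y))); [| intros; rewrite hom_star; apply starG_star].
  destruct (@starG_ideal G2) as [[I1 [IM IV]] [IC IS]].
  repeat split; intros.
  - rewrite hom_one. exact I1.
  - rewrite hom_mul. auto.
  - rewrite hom_inv. auto.
  - rewrite hom_conj. auto.
  - rewrite hom_star. auto.
Qed.

Lemma commG_hom x : commG x -> commG (f x).
Proof.
  intro Hx. apply (Hx (fun y => commG (f y))); [| intros; rewrite hom_comm; apply commG_comm].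
  destruct (@commG_subgroup G2) as [S1 [SM SV]].
  repeat split; intros.
  - rewrite hom_one. exact S1.
  - rewrite hom_mul. auto.
  - rewrite hom_inv. auto.
Qed.

Lemma McommG_hom x : McommG x -> McommG (f x).
Proof.
  intros [a [b [Ha [Hb ->]]]]. exists (f a), (f b).
  split; [apply starG_hom, Ha | split; [apply commG_hom, Hb | apply hom_mul]].
Qed.

Section TrivialKernelOnMcommG.
Hypothesis f_ker : forall x, f x = one -> McommG x -> x = one.

Lemma hom_McommG_inj x y : McommG x -> McommG y -> f x = f y -> x = y.
Proof.
  intros Hx Hy E. apply mulgV_eq1, f_ker.
  - rewrite hom_mul, hom_inv, E, mulgV. reflexivity.
  - apply McommG_mul; [exact Hx | apply McommG_inv, Hy].
Qed.

Lemma MZ_of_hom_MZ x : MZ (f x) -> MZ x.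
Proof.
  intros [Hl Hc]. split.
  - intro y. apply f_ker.
    + rewrite hom_star. apply Hl.
    + apply McommG_starG, starG_star.
  - intro y. apply comm_eq1_commute, f_ker.
    + rewrite hom_comm. apply comm_center_l, Hc.
    + apply McommG_commG, commG_comm.
Qed.

End TrivialKernelOnMcommG.

Section SurjectiveModuloCentre.
Hypothesis f_onto_mod_MZ : forall y, exists x c, MZ c /\ y = mul (f x) c.

Lemma hom_star_onto y y' : exists x x', star y y' = f (star x x').
Proof.
  destruct (f_onto_mod_MZ y) as [x [c [Hc ->]]].
  destruct (f_onto_mod_MZ y') as [x' [c' [Hc' ->]]].
  exists x, x'. rewrite star_mulZl, star_mulZr, hom_star by assumption. reflexivity.
Qed.

Lemma hom_comm_onto y y' : exists x x', comm y y' = f (comm x x').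
Proof.
  destruct (f_onto_mod_MZ y) as [x [c [Hc ->]]].
  destruct (f_onto_mod_MZ y') as [x' [c' [Hc' ->]]].
  exists x, x'. rewrite comm_mulZl, comm_mulZr, hom_comm by apply Hc || apply Hc'.
  reflexivity.
Qed.

Lemma image_starG_ideal : is_ideal (fun y => exists x, starG x /\ f x = y).
Proof.
  destruct (@starG_ideal G1) as [[I1 [IM IV]] [IC IS]].
  repeat split.
  - exists one. split; [exact I1 | apply hom_one].
  - intros _ _ [x [Hx <-]] [y [Hy <-]]. exists (mul x y). split; [auto | apply hom_mul].
  - intros _ [x [Hx <-]]. exists (inv x). split; [auto | apply hom_inv].
  - intros g _ [x [Hx <-]]. destruct (f_onto_mod_MZ g) as [g1 [c [[_ Hc] ->]]].
    exists (conj g1 x). split; [auto |]. rewrite conj_mulZl, hom_conj by exact Hc.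
    reflexivity.
  - intros g _ [x [Hx <-]]. destruct (f_onto_mod_MZ g) as [g1 [c [Hc ->]]].
    exists (star g1 x). split; [auto |]. rewrite star_mulZl, hom_star by exact Hc.
    reflexivity.
Qed.

Lemma image_commG_subgroup : is_subgroup (fun y => exists x, commG x /\ f x = y).
Proof.
  destruct (@commG_subgroup G1) as [S1 [SM SV]].
  repeat split.
  - exists one. split; [exact S1 | apply hom_one].
  - intros _ _ [x [Hx <-]] [y [Hy <-]]. exists (mul x y). split; [auto | apply hom_mul].
  - intros _ [x [Hx <-]]. exists (inv x). split; [auto | apply hom_inv].
Qed.

Lemma McommG_hom_onto y : McommG y -> exists x, McommG x /\ f x = y.
Proof.
  intros [a [b [Ha [Hb ->]]]].
  destruct (Ha _ image_starG_ideal) as [a1 [Ha1 <-]].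
  { intros p q. destruct (hom_star_onto p q) as [x [x' ->]].
    exists (star x x'). split; [apply starG_star | reflexivity]. }
  destruct (Hb _ image_commG_subgroup) as [b1 [Hb1 <-]].
  { intros p q. destruct (hom_comm_onto p q) as [x [x' ->]].
    exists (comm x x'). split; [apply commG_comm | reflexivity]. }
  exists (mul a1 b1). split; [exists a1, b1; auto | apply hom_mul].
Qed.

End SurjectiveModuloCentre.

End Homomorphism.

Section CentralExtension.
Context {H G K : MLA} {alpha : H -> G} {beta : G -> K}.
Hypothesis Hbeta : is_hom beta.
Hypothesis ker_beta : forall g, beta g = one <-> exists h, alpha h = g.

Lemma beta_alpha h : beta (alpha h) = one.
Proof. apply ker_beta. exists h. reflexivity. Qed.

Lemma beta_fibre g g' : beta g' = beta g -> exists h, g' = mul g (alpha h).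
Proof.
  intro E. destruct (proj1 (ker_beta (mul (inv g) g'))) as [h Hh].
  - rewrite hom_mul, hom_inv, E, mulVg by exact Hbeta. reflexivity.
  - exists h. rewrite Hh, mulKg. reflexivity.
Qed.

End CentralExtension.

Section IsoclinicMorphism.
Context {H1 G1 K1 H2 G2 K2 : MLA}
  {alpha1 : H1 -> G1} {beta1 : G1 -> K1} {alpha2 : H2 -> G2} {beta2 : G2 -> K2}
  {mu : G1 -> G2} {nu : K1 -> K2}.
Hypothesis Hbeta1 : is_hom beta1.
Hypothesis beta1_onto : forall k, exists g, beta1 g = k.
Hypothesis ker_beta1 : forall g, beta1 g = one <-> exists h, alpha1 h = g.
Hypothesis MZ_alpha1 : forall g, MZ g -> exists h, alpha1 h = g.
Hypothesis Hbeta2 : is_hom beta2.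
Hypothesis beta2_onto : forall k, exists g, beta2 g = k.
Hypothesis ker_beta2 : forall g, beta2 g = one <-> exists h, alpha2 h = g.
Hypothesis alpha2_MZ : forall h, MZ (alpha2 h).
Hypothesis Hmu : is_hom mu.
Hypothesis beta_mu : forall g, beta2 (mu g) = nu (beta1 g).
Hypothesis mu_ker : forall g, mu g = one -> McommG g -> g = one.
Hypothesis mu_onto_mod_alpha2 :
  forall g2, exists g1 h2, g2 = mul (mu g1) (alpha2 h2).

Lemma mu_onto_mod_MZ y : exists x c, MZ c /\ y = mul (mu x) c.
Proof.
  destruct (mu_onto_mod_alpha2 y) as [x [h ->]]. exists x, (alpha2 h).
  split; [apply alpha2_MZ | reflexivity].
Qed.

Lemma nu_inj k k' : nu k = nu k' -> k = k'.
Proof.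
  intro E. destruct (beta1_onto k) as [g <-]. destruct (beta1_onto k') as [g' <-].
  assert (Hx : MZ (mul g (inv g'))).
  { apply (MZ_of_hom_MZ Hmu mu_ker).
    destruct (proj1 (ker_beta2 (mu (mul g (inv g'))))) as [h <-]; [| apply alpha2_MZ].
    rewrite !(hom_mul Hmu), (hom_inv Hmu), (hom_mul Hbeta2), (hom_inv Hbeta2), !beta_mu, E.
    apply mulgV. }
  apply mulgV_eq1. rewrite <- (hom_inv Hbeta1), <- (hom_mul Hbeta1).
  apply ker_beta1, MZ_alpha1, Hx.
Qed.

Lemma nu_onto k2 : exists k1, nu k1 = k2.
Proof.
  destruct (beta2_onto k2) as [g2 <-]. destruct (mu_onto_mod_alpha2 g2) as [g1 [h2 ->]].
  exists (beta1 g1).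
  rewrite (hom_mul Hbeta2), beta_mu, (beta_alpha ker_beta2), mulg1. reflexivity.
Qed.

Lemma mu_fibre g h : beta2 h = nu (beta1 g) -> exists c, MZ c /\ h = mul (mu g) c.
Proof.
  rewrite <- beta_mu. intro E. destruct (beta_fibre Hbeta2 ker_beta2 _ _ E) as [k ->].
  exists (alpha2 k). split; [apply alpha2_MZ | reflexivity].
Qed.

Lemma mu_comm_lift g g' h h' : beta2 h = nu (beta1 g) -> beta2 h' = nu (beta1 g') ->
  mu (comm g g') = comm h h'.
Proof.
  intros E E'. destruct (mu_fibre E) as [c [[_ Hc] ->]].
  destruct (mu_fibre E') as [c' [[_ Hc'] ->]].
  rewrite comm_mulZl, comm_mulZr by assumption. apply (hom_comm Hmu).
Qed.

Lemma mu_star_lift g g' h h' : beta2 h = nu (beta1 g) -> beta2 h' = nu (beta1 g') ->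
  mu (star g g') = star h h'.
Proof.
  intros E E'. destruct (mu_fibre E) as [c [Hc ->]]. destruct (mu_fibre E') as [c' [Hc' ->]].
  rewrite star_mulZl, star_mulZr by assumption. apply (hom_star Hmu).
Qed.

End IsoclinicMorphism.

Theorem proposition4p8 (H1 G1 K1 H2 G2 K2 : MLA)
  (alpha1 : H1 -> G1) (beta1 : G1 -> K1) (alpha2 : H2 -> G2) (beta2 : G2 -> K2)
  (lam : H1 -> H2) (mu : G1 -> G2) (nu : K1 -> K2) :
  central_extension alpha1 beta1 ->
  central_extension alpha2 beta2 ->
  (forall g : G1, (exists h, alpha1 h = g) <-> MZ g) ->
  (forall g : G2, (exists h, alpha2 h = g) <-> MZ g) ->
  ext_morphism alpha1 beta1 alpha2 beta2 lam mu nu ->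
  (forall g : G1, mu g = one -> McommG g -> g = one) ->
  (forall g2 : G2, exists (g1 : G1) (h2 : H2), g2 = mul (mu g1) (alpha2 h2)) ->
  isoclinic_morphism alpha1 beta1 alpha2 beta2 lam mu nu.
Proof.
  intros [_ [Hb1 [_ [Hbs1 [Hk1 _]]]]] [_ [Hb2 [_ [Hbs2 [Hk2 Hc2]]]]] Z1 _ EM Hker Hsurj.
  pose proof EM as [_ [Hmu [_ [_ Hbm]]]].
  split; [exact EM |].
  split; [exact (nu_inj Hb1 Hbs1 Hk1 (fun g => proj2 (Z1 g)) Hb2 Hk2 Hc2 Hmu Hbm Hker) |].
  split; [exact (nu_onto Hb2 Hbs2 Hk2 Hbm Hsurj) |].
  split; [exact (McommG_hom Hmu) |].
  split; [exact (hom_McommG_inj Hmu Hker) |].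
  split; [exact (McommG_hom_onto Hmu (mu_onto_mod_MZ Hc2 Hsurj)) |].
  intros g g' h h' E E'. split.
  - exact (mu_comm_lift Hb2 Hk2 Hc2 Hmu Hbm _ _ _ _ E E').
  - exact (mu_star_lift Hb2 Hk2 Hc2 Hmu Hbm _ _ _ _ E E').
Qed.
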